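(* Let $\lambda\in\overline{\mathbb C}_+\setminus\{0\}$ and put $h(x,\lambda)=\big|\exp\big(\tfrac23z(x,\lambda)^{3/2}\big)\big|=\exp\big(\mathrm{Re}\,\lambda\,\xi(x\lambda^{-1/2})\big)$ for $x\ge0$. Then: (1) if $\lambda>0$, then $h(\cdot,\lambda)$ is strictly increasing on $[x_*,\infty)$ and $h(\cdot,\lambda)\equiv1$ on $[0,x_*]$, where $x_*=\sqrt\lambda$; (2) if $0<\arg\lambda\le\pi$, then $h(\cdot,\lambda)$ is strictly increasing on $[0,\infty)$.
   Context: Powers and logarithms are principal on $\mathbb C\setminus(-\infty,0]$. $S(I)=\{re^{i\varphi}:r>0,\varphi\in I\}$. Let $\xi(t)=\int_1^t\sqrt{s^2-1}\,ds=\frac12\big(t\sqrt{t^2-1}-\log(t+\sqrt{t^2-1})\big)$, holomorphic on $S(-\pi/2,0)$ with $\xi(t)>0$ for $t>1$, extended by continuity to $\overline{S(-\pi/2,0)}$ (so $\xi(0)=i\pi/4$). It is a fact that $\xi(t)\ne0$ for $t\ne1$ and $\xi$ takes values with argument in $[-3\pi/2,0]$; let $\Phi(t)\in[-3\pi/2,0]$ be that determination of $\arg\xi(t)$. Define $k(t)=|\tfrac32\xi(t)|^{2/3}e^{\frac23i\Phi(t)}$ (so $k(0)=-(3\pi/8)^{2/3}$, $k>0$ for $t>1$); $k$ is a conformal map of $S(-\pi/2,0)$. For $\lambda=|\lambda|e^{2i\theta}$, $\theta\in[0,\pi/2]$, and $x\ge0$, set $z(x,\lambda)=\lambda^{2/3}k(x\lambda^{-1/2})$,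 and use the convention $\tfrac23z(x,\lambda)^{3/2}:=\lambda\,\xi(x\lambda^{-1/2})$. *)

From Stdlib Require Import Reals Lra ClassicalEpsilon.
From Coquelicot Require Import Coquelicot.
Open Scope R_scope.

(* Principal argument, values in (-PI, PI]; Carg 0 = 0 (irrelevant). *)
Definition Carg (z : C) : R :=
  let x := Re z in let y := Im z in
  if Rlt_dec 0 x then atan (y / x)
  else if Rlt_dec x 0 then
    (if Rle_dec 0 y then atan (y / x) + PI else atan (y / x) - PI)
  else if Rlt_dec 0 y then PI / 2
  else if Rlt_dec y 0 then - (PI / 2)
  else 0.

Definition Cexp (w : C) : C := (exp (Re w) * cos (Im w), exp (Re w) * sin (Im w)).
Definition Clog (z : C) : C := (ln (Cmod z), Carg z).

(* Principal power z^a = exp(a log z), with 0^a := 0. *)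
Definition Cpow (z a : C) : C :=
  if Ceq_dec z 0 then 0%C else Cexp (Cmult a (Clog z)).

Definition Csqrt (z : C) : C := Cpow z (RtoC (1/2)).

Definition xi_formula (t : C) : C :=
  Cmult (RtoC (1/2))
    (Cminus (Cmult t (Csqrt (Cminus (Cmult t t) 1)))
            (Clog (Cplus t (Csqrt (Cminus (Cmult t t) 1))))).

Definition open_sector (t : C) : Prop :=
  t <> 0%C /\ - (PI / 2) < Carg t < 0.

(* xi: the formula on the open sector, extended by continuity (limit within
   the open sector) to the closure of the sector. *)
Definition xi (t : C) : C :=
  if excluded_middle_informative (open_sector t) then xi_formula t
  else @lim C_CompleteNormedModule
         (filtermap xi_formula (within open_sector (locally (t : C_CompleteNormedModule)))).

Definition h (x : R) (lam : C) : R :=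
  exp (Re (Cmult lam (xi (Cmult (RtoC x) (Cpow lam (RtoC (-1/2))))))).

From Pilot Require Import Defs.
From Stdlib Require Import Reals Lra Psatz ClassicalEpsilon.
From Coquelicot Require Import Coquelicot.
Open Scope R_scope.

(* Differentiating in x, the derivative of [log h x lam = Re (lam * xi (x * lam^(-1/2)))] is
   [Re (lam^(1/2) * sqrt (x^2 / lam - 1))], the real part of the square root of [x^2 - lam]
   with nonnegative real part.  For [Im lam > 0] that real part is strictly positive, so [h]
   increases on [[0, oo)]; to make this checkable, [lam] is written as [(sr * e^(i al))^2], the
   principal square root and logarithm in [xi] are expanded into real formulas, and
   [Re (lam * xi (x * lam^(-1/2)))] becomes an explicit function of [x] whose derivative is
   computed.  For [lam > 0] the point [x / sqrt lam] is real: [xi] is purely imaginary on [[0, 1]]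
   (so [h = 1]) and equals the increasing [int_1^s sqrt (u^2 - 1) du] beyond [1].  For [lam < 0]
   the point lies on the negative imaginary axis, where
   [Re xi (-i s) = - (s sqrt (1 + s^2) + arsinh s) / 2] decreases.  The values of [xi] on the
   boundary of the sector are limits of the explicit formulas, which are continuous there. *)

Lemma Cmod_pair_abs x y : x <> 0 -> Cmod (x, y) = Rabs x * sqrt (1 + (y / x)²).
Proof.
  intro Hx. unfold Cmod; simpl.
  rewrite <- sqrt_Rsqr_abs, <- sqrt_mult_alt by apply Rle_0_sqr.
  f_equal. unfold Rsqr. field. exact Hx.
Qed.

Lemma Cmod_real a : Cmod (a, 0) = Rabs a.
Proof. unfold Cmod; cbn [fst snd]. rewrite <- sqrt_Rsqr_abs. f_equal. unfold Rsqr. ring. Qed.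

Lemma Cmod_Carg_polar (z : C) : z <> 0%C ->
  Re z = Cmod z * cos (Carg z) /\ Im z = Cmod z * sin (Carg z).
Proof.
  destruct z as [x y]; intro Hz. unfold Carg; simpl.
  assert (Hu : 0 < sqrt (1 + (y / x)²)) by (apply sqrt_lt_R0; pose proof (Rle_0_sqr (y / x)); lra).
  destruct (Rlt_dec 0 x) as [Hx|Hx].
  { rewrite Cmod_pair_abs, cos_atan, sin_atan, Rabs_pos_eq by lra.
    split; field; lra. }
  destruct (Rlt_dec x 0) as [Hx'|Hx'].
  { rewrite Cmod_pair_abs, Rabs_left by lra.
    destruct (Rle_dec 0 y).
    - rewrite neg_cos, neg_sin, cos_atan, sin_atan. split; field; lra.
    - replace (atan (y / x) - PI) with (atan (y / x) + PI - 2 * PI) by ring.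
      rewrite cos_minus, sin_minus, cos_2PI, sin_2PI, neg_cos, neg_sin, cos_atan, sin_atan.
      split; field; lra. }
  assert (x = 0) by lra. subst x.
  unfold Cmod; cbn [fst snd].
  destruct (Rlt_dec 0 y).
  { rewrite cos_PI2, sin_PI2. replace (0 ^ 2 + y ^ 2) with (y * y) by ring.
    rewrite sqrt_square by lra. lra. }
  destruct (Rlt_dec y 0).
  { rewrite cos_neg, sin_neg, cos_PI2, sin_PI2. replace (0 ^ 2 + y ^ 2) with (- y * - y) by ring.
    rewrite sqrt_square by lra. lra. }
  exfalso. apply Hz. replace y with 0 by lra. reflexivity.
Qed.

Lemma Carg_lower_half z : Im z < 0 -> Carg z = - (PI / 2) - atan (Re z / Im z).
Proof.
  destruct z as [x y]. unfold Carg, Re, Im; cbn [fst snd]. intro Hy.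
  destruct (Rlt_dec 0 x).
  { replace (x / y) with (- / (- (y / x))) by (field; lra).
    rewrite atan_opp, atan_inv, atan_opp. lra.
    apply Ropp_gt_lt_0_contravar, Rdiv_neg_pos; lra. }
  destruct (Rlt_dec x 0).
  { destruct (Rle_dec 0 y); [lra|].
    replace (x / y) with (/ (y / x)) by (field; lra).
    rewrite atan_inv by (apply Rdiv_neg_neg; lra). lra. }
  destruct (Rlt_dec 0 y); [lra|]. destruct (Rlt_dec y 0); [|lra].
  replace x with 0 by lra. unfold Rdiv. rewrite Rmult_0_l, atan_0. lra.
Qed.

Lemma Carg_upper_half z : 0 < Im z -> Carg z = PI / 2 - atan (Re z / Im z).
Proof.
  destruct z as [x y]. unfold Carg, Re, Im; cbn [fst snd]. intro Hy.
  destruct (Rlt_dec 0 x).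
  { replace (x / y) with (/ (y / x)) by (field; lra).
    rewrite atan_inv by (apply Rdiv_pos_pos; lra). lra. }
  destruct (Rlt_dec x 0).
  { destruct (Rle_dec 0 y); [|lra].
    replace (x / y) with (- / (- (y / x))) by (field; lra).
    rewrite atan_opp, atan_inv, atan_opp. lra.
    apply Ropp_gt_lt_0_contravar, Rdiv_pos_neg; lra. }
  destruct (Rlt_dec 0 y); [|lra].
  replace x with 0 by lra. unfold Rdiv. rewrite Rmult_0_l, atan_0. lra.
Qed.

Lemma Carg_pos_real a : 0 < a -> Carg (a, 0) = 0.
Proof.
  intro. unfold Carg; cbn [Re Im fst snd]. destruct (Rlt_dec 0 a); [|lra].
  unfold Rdiv. rewrite Rmult_0_l. apply atan_0.
Qed.

Lemma Carg_neg_real a : a < 0 -> Carg (a, 0) = PI.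
Proof.
  intro. unfold Carg; cbn [Re Im fst snd].
  destruct (Rlt_dec 0 a); [lra|]. destruct (Rlt_dec a 0); [|lra].
  destruct (Rle_dec 0 0); [|lra]. unfold Rdiv. rewrite Rmult_0_l, atan_0. ring.
Qed.

Lemma Carg_polar_lower r th : 0 < r -> - PI < th < 0 -> Carg (r * cos th, r * sin th) = th.
Proof.
  intros Hr Hth. pose proof PI_RGT_0.
  assert (Hs : sin th < 0) by (apply sin_lt_0_var; lra).
  rewrite Carg_lower_half by (simpl; nra). cbn [Re Im fst snd].
  replace (r * cos th / (r * sin th)) with (tan (- (PI / 2) - th)).
  - rewrite atan_tan by lra. ring.
  - unfold tan. rewrite sin_minus, cos_minus, sin_neg, cos_neg, sin_PI2, cos_PI2. field. lra.
Qed.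

Lemma open_sector_iff t : open_sector t <-> 0 < Re t /\ Im t < 0.
Proof.
  destruct t as [x y]. unfold open_sector, Carg; simpl.
  pose proof (atan_bound (y / x)). pose proof PI_RGT_0.
  split.
  - intros [Hz Ha]. destruct (Rlt_dec 0 x).
    + split; [assumption|]. destruct (Rlt_dec y 0); [assumption|]. exfalso.
      assert (0 <= atan (y / x)); [|lra].
      destruct (Req_dec y 0) as [->|Hy].
      * unfold Rdiv. rewrite Rmult_0_l, atan_0. lra.
      * left. rewrite <- atan_0. apply atan_increasing, Rdiv_pos_pos; lra.
    + destruct (Rlt_dec x 0).
      * destruct (Rle_dec 0 y); lra.
      * destruct (Rlt_dec 0 y); [lra|]. destruct (Rlt_dec y 0); lra.
  - intros [Hx Hy]. split.
    + intro E. injection E. lra.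
    + destruct (Rlt_dec 0 x); [|lra]. split; [lra|].
      rewrite <- atan_0. apply atan_increasing, Rdiv_neg_pos; lra.
Qed.

Definition sqrt_re (u v : R) : R := sqrt ((sqrt (u ^ 2 + v ^ 2) + u) / 2).
Definition sqrt_im (u v : R) : R := sqrt ((sqrt (u ^ 2 + v ^ 2) - u) / 2).

Lemma sqrt_re_im_spec u v : v <> 0 ->
  0 < sqrt_re u v /\ 0 < sqrt_im u v /\
  sqrt_re u v * sqrt_re u v - sqrt_im u v * sqrt_im u v = u /\
  2 * sqrt_re u v * sqrt_im u v = Rabs v /\
  sqrt_re u v * sqrt_re u v + sqrt_im u v * sqrt_im u v = sqrt (u ^ 2 + v ^ 2).
Proof.
  intro Hv. unfold sqrt_re, sqrt_im.
  set (m := sqrt (u ^ 2 + v ^ 2)).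
  assert (Hv2 : 0 < v * v) by (destruct (Rdichotomy _ _ Hv); nra).
  assert (Hm : m * m = u ^ 2 + v ^ 2) by (apply sqrt_sqrt; nra).
  assert (Hm0 : 0 <= m) by apply sqrt_pos.
  assert (Hu1 : u < m) by nra. assert (Hu2 : - u < m) by nra.
  assert (Ep : sqrt ((m + u) / 2) * sqrt ((m + u) / 2) = (m + u) / 2) by (apply sqrt_sqrt; lra).
  assert (Eq : sqrt ((m - u) / 2) * sqrt ((m - u) / 2) = (m - u) / 2) by (apply sqrt_sqrt; lra).
  assert (Hp : 0 < sqrt ((m + u) / 2)) by (apply sqrt_lt_R0; lra).
  assert (Hq : 0 < sqrt ((m - u) / 2)) by (apply sqrt_lt_R0; lra).
  repeat split; try assumption.
  - lra.
  - rewrite <- sqrt_Rsqr_abs. unfold Rsqr.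
    rewrite Rmult_assoc, <- sqrt_mult_alt by lra. rewrite <- (sqrt_square 2) at 1 by lra.
    rewrite <- sqrt_mult_alt by lra. f_equal. field_simplify. nra.
  - lra.
Qed.

Lemma sqrt_re_im_nonneg u : 0 <= u -> sqrt_re u 0 = sqrt u /\ sqrt_im u 0 = 0.
Proof.
  intro Hu. unfold sqrt_re, sqrt_im.
  replace (u ^ 2 + 0 ^ 2) with (u * u) by ring. rewrite sqrt_square by exact Hu.
  replace ((u + u) / 2) with u by field. replace ((u - u) / 2) with 0 by field.
  split; [reflexivity|apply sqrt_0].
Qed.

Lemma sqrt_re_im_nonpos u : u <= 0 -> sqrt_re u 0 = 0 /\ sqrt_im u 0 = sqrt (- u).
Proof.
  intro Hu. unfold sqrt_re, sqrt_im.
  replace (u ^ 2 + 0 ^ 2) with (- u * - u) by ring. rewrite sqrt_square by lra.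
  replace ((- u + u) / 2) with 0 by field. replace ((- u - u) / 2) with (- u) by field.
  split; [apply sqrt_0|reflexivity].
Qed.

Lemma Csqrt_lower_half w : Im w < 0 -> Csqrt w = (sqrt_re (Re w) (Im w), - sqrt_im (Re w) (Im w)).
Proof.
  intro Hw. pose proof PI_RGT_0. pose proof (atan_bound (Re w / Im w)).
  assert (Hw0 : w <> 0%C) by (intro E; subst; simpl in Hw; lra).
  destruct (Cmod_Carg_polar w Hw0) as [Hre _].
  assert (Hth : - PI < Carg w < 0) by (rewrite Carg_lower_half by exact Hw; lra).
  assert (Hr : 0 < Cmod w) by (apply Cmod_gt_0; exact Hw0).
  unfold Csqrt, Defs.Cpow. destruct (Ceq_dec w 0) as [E|_]; [contradiction|].
  unfold Defs.Cexp, Defs.Clog, sqrt_re, sqrt_im. cbn [Re Im fst snd RtoC Cmult].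
  change (sqrt (Re w ^ 2 + Im w ^ 2)) with (Cmod w).
  set (r := Cmod w) in *. set (th := Carg w) in *.
  replace (1 / 2 * ln r - 0 * th) with (/ 2 * ln r) by field.
  replace (1 / 2 * th + 0 * ln r) with (th / 2) by field.
  assert (Hc : 0 < cos (th / 2)) by (apply cos_gt_0; lra).
  assert (Hs : sin (th / 2) < 0) by (apply sin_lt_0_var; lra).
  assert (Hc2 : cos th = 2 * cos (th / 2) * cos (th / 2) - 1)
    by (rewrite <- cos_2a_cos; f_equal; field).
  assert (Hs2 : cos th = 1 - 2 * sin (th / 2) * sin (th / 2))
    by (rewrite <- cos_2a_sin; f_equal; field).
  change (exp (/ 2 * ln r)) with (Rpower r (/ 2)). rewrite Rpower_sqrt by exact Hr.
  assert (Hsr : sqrt r * sqrt r = r) by (apply sqrt_sqrt; lra).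
  pose proof (sqrt_lt_R0 r Hr).
  f_equal.
  - symmetry. apply sqrt_lem_1; [rewrite Hre; nra | apply Rmult_le_pos; lra |].
    rewrite Hre. transitivity (sqrt r * sqrt r * (cos (th / 2) * cos (th / 2))); [ring|].
    rewrite Hsr. nra.
  - replace (sqrt r * sin (th / 2)) with (- (sqrt r * - sin (th / 2))) by ring. f_equal.
    symmetry. apply sqrt_lem_1; [rewrite Hre; nra | apply Rmult_le_pos; lra |].
    rewrite Hre. transitivity (sqrt r * sqrt r * (sin (th / 2) * sin (th / 2))); [ring|].
    rewrite Hsr. nra.
Qed.

Lemma Cpow_neg_half (lam : C) : lam <> 0%C ->
  Defs.Cpow lam (RtoC (-1 / 2)) =
  (/ sqrt (Cmod lam) * cos (Carg lam / 2), - (/ sqrt (Cmod lam) * sin (Carg lam / 2))).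
Proof.
  intro Hl. assert (Hr : 0 < Cmod lam) by (apply Cmod_gt_0; exact Hl).
  unfold Defs.Cpow. destruct (Ceq_dec lam 0) as [E|_]; [contradiction|].
  unfold Defs.Cexp, Defs.Clog. cbn [Re Im fst snd RtoC Cmult].
  replace (-1 / 2 * ln (Cmod lam) - 0 * Carg lam) with (- (/ 2 * ln (Cmod lam))) by field.
  replace (-1 / 2 * Carg lam + 0 * ln (Cmod lam)) with (- (Carg lam / 2)) by field.
  rewrite exp_Ropp. change (exp (/ 2 * ln (Cmod lam))) with (Rpower (Cmod lam) (/ 2)).
  rewrite Rpower_sqrt by exact Hr. rewrite cos_neg, sin_neg. f_equal. ring.
Qed.

Lemma eq_of_sqr_eq_re_pos u1 u2 v1 v2 : 0 < u1 -> 0 < v1 ->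
  u1 * u1 - u2 * u2 = v1 * v1 - v2 * v2 -> u1 * u2 = v1 * v2 -> u1 = v1 /\ u2 = v2.
Proof.
  intros H1 H2 E1 E2.
  assert (Eu2 : u2 = v1 * v2 / u1) by (apply (Rmult_eq_reg_l u1); [rewrite E2; field|]; lra).
  subst u2.
  assert (E3 : (u1 * u1 - v1 * v1) * (u1 * u1 + v2 * v2) = 0).
  { apply (Rmult_eq_reg_r (/ (u1 * u1))); [|apply Rinv_neq_0_compat; nra].
    rewrite Rmult_0_l. transitivity (u1 * u1 - v1 * v2 / u1 * (v1 * v2 / u1) - (v1 * v1 - v2 * v2)).
    - field. lra.
    - rewrite E1. ring. }
  apply Rmult_integral in E3. destruct E3 as [E3|E3]; [|nra].
  assert (u1 = v1) by nra. subst. split; [reflexivity|]. field. lra.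
Qed.

Lemma lim_eq_of_is_filter_lim (F : (R -> Prop) -> Prop) (l : R) :
  ProperFilter F -> is_filter_lim F l -> lim F = l.
Proof.
  intros HF Hl.
  assert (Hc : cauchy F) by (intro eps; exists l; apply Hl; exists eps; auto).
  assert (HL : is_filter_lim (T := R_UniformSpace) F (lim F)).
  { intros P [eps He]. apply (filter_imp _ _ He). apply (complete_cauchy F HF Hc eps). }
  exact (is_filter_lim_unique (K := R_AbsRing) (V := R_NormedModule) (F := F) (lim F) l HL Hl).
Qed.

Lemma within_sector_proper (t0 : C) : 0 <= Re t0 -> Im t0 <= 0 ->
  ProperFilter (within open_sector (locally (t0 : C_CompleteNormedModule))).
Proof.
  intros H1 H2. split; [|apply within_filter, locally_filter].
  intros P [eps He].
  set (d := eps / 2).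
  assert (Hd : 0 < d) by (pose proof (cond_pos eps); unfold d; lra).
  exists (Re t0 + d, Im t0 - d). apply He.
  - pose proof (cond_pos eps). destruct t0 as [x y]. split; simpl in *.
    + change (Rabs (x + d - x) < eps). replace (x + d - x) with d by ring.
      rewrite Rabs_pos_eq by lra. unfold d; lra.
    + change (Rabs (y - d - y) < eps). replace (y - d - y) with (- d) by ring.
      rewrite Rabs_Ropp, Rabs_pos_eq by lra. unfold d; lra.
  - apply open_sector_iff. simpl. lra.
Qed.

Lemma lim_within_sector (t0 : C) (f g : C -> R) : 0 <= Re t0 -> Im t0 <= 0 ->
  (forall t, open_sector t -> f t = g t) ->
  filterlim g (locally (t0 : C_UniformSpace)) (locally (g t0)) ->
  lim (filtermap f (within open_sector (locally (t0 : C_CompleteNormedModule)))) = g t0.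
Proof.
  intros H1 H2 Hfg Hg. apply lim_eq_of_is_filter_lim.
  - apply filtermap_proper_filter, within_sector_proper; assumption.
  - apply (filterlim_within_ext open_sector g); [intros; symmetry; auto|].
    intros Q HQ. apply Hg in HQ. revert HQ. unfold filtermap, within. apply filter_imp. auto.
Qed.

Lemma Re_xi_boundary (t0 : C) (g : C -> R) :
  ~ open_sector t0 -> 0 <= Re t0 -> Im t0 <= 0 ->
  (forall t, open_sector t -> Re (xi_formula t) = g t) ->
  filterlim g (locally (t0 : C_UniformSpace)) (locally (g t0)) ->
  Re (xi t0) = g t0.
Proof.
  intros Hn H1 H2 Hfg Hg. unfold xi.
  destruct (excluded_middle_informative (open_sector t0)) as [Hs|_]; [contradiction|].
  exact (lim_within_sector t0 (fun t => Re (xi_formula t)) g H1 H2 Hfg Hg).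
Qed.

Lemma Im_xi_boundary (t0 : C) (g : C -> R) :
  ~ open_sector t0 -> 0 <= Re t0 -> Im t0 <= 0 ->
  (forall t, open_sector t -> Im (xi_formula t) = g t) ->
  filterlim g (locally (t0 : C_UniformSpace)) (locally (g t0)) ->
  Im (xi t0) = g t0.
Proof.
  intros Hn H1 H2 Hfg Hg. unfold xi.
  destruct (excluded_middle_informative (open_sector t0)) as [Hs|_]; [contradiction|].
  exact (lim_within_sector t0 (fun t => Im (xi_formula t)) g H1 H2 Hfg Hg).
Qed.

Lemma xi_open_sector t : open_sector t -> xi t = xi_formula t.
Proof.
  intro Hs. unfold xi.
  destruct (excluded_middle_informative (open_sector t)); [reflexivity|contradiction].
Qed.

(* The real and imaginary parts of [xi_formula (x, y)] on the open sector, in a form that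
   remains continuous on its closure. *)
Definition root_re (x y : R) : R := sqrt_re (x * x - y * y - 1) (2 * x * y).
Definition root_im (x y : R) : R := - sqrt_im (x * x - y * y - 1) (2 * x * y).

Definition xi_re (x y : R) : R :=
  1 / 2 * ((x * root_re x y - y * root_im x y)
           - ln (sqrt ((x + root_re x y) ^ 2 + (y + root_im x y) ^ 2))).
Definition xi_im (x y : R) : R :=
  1 / 2 * ((x * root_im x y + y * root_re x y)
           - (- (PI / 2) - atan ((x + root_re x y) / (y + root_im x y)))).

Lemma Csqr_sub_1 x y : Cminus (Cmult (x, y) (x, y)) 1 = (x * x - y * y - 1, 2 * x * y).
Proof. unfold Cminus, Cmult, Cplus, Copp, RtoC; simpl. f_equal; ring. Qed.

Lemma root_im_nonpos x y : root_im x y <= 0.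
Proof. unfold root_im, sqrt_im. rewrite <- Ropp_0. apply Ropp_le_contravar, sqrt_pos. Qed.

Lemma xi_formula_parts x y : open_sector (x, y) ->
  Re (xi_formula (x, y)) = xi_re x y /\ Im (xi_formula (x, y)) = xi_im x y.
Proof.
  intro Hs. apply open_sector_iff in Hs. simpl in Hs.
  unfold xi_formula. rewrite Csqr_sub_1, Csqrt_lower_half by (simpl; nra).
  change (sqrt_re _ _) with (root_re x y). change (- sqrt_im _ _) with (root_im x y).
  unfold xi_re, xi_im, Defs.Clog, Cmod.
  rewrite (Carg_lower_half (Cplus (x, y) (root_re x y, root_im x y)))
    by (simpl; pose proof (root_im_nonpos x y); lra).
  cbn [Re Im fst snd Cmult Cminus Cplus Copp RtoC]. split; ring.
Qed.

Lemma continuity_2d_pt_sqrt f x y :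
  continuity_2d_pt f x y -> continuity_2d_pt (fun u v => sqrt (f u v)) x y.
Proof. apply continuity_1d_2d_pt_comp, continuity_pt_filterlim, continuous_sqrt. Qed.

Lemma continuity_2d_pt_pow2 f x y :
  continuity_2d_pt f x y -> continuity_2d_pt (fun u v => f u v ^ 2) x y.
Proof.
  intro Hf. apply (continuity_2d_pt_ext (fun u v => f u v * f u v)); [intros; ring|].
  apply continuity_2d_pt_mult; exact Hf.
Qed.

Ltac continuity_2d :=
  repeat first [ apply continuity_2d_pt_plus | apply continuity_2d_pt_minus
               | apply continuity_2d_pt_mult | apply continuity_2d_pt_opp
               | apply continuity_2d_pt_id1 | apply continuity_2d_pt_id2
               | apply continuity_2d_pt_const | apply continuity_2d_pt_sqrt
               | apply continuity_2d_pt_pow2 ].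

Lemma continuity_root_re x y : continuity_2d_pt root_re x y.
Proof. unfold root_re, sqrt_re, Rdiv. continuity_2d. Qed.

Lemma continuity_root_im x y : continuity_2d_pt root_im x y.
Proof. unfold root_im, sqrt_im, Rdiv. continuity_2d. Qed.

Lemma continuity_xi_re x y : 0 < (x + root_re x y) ^ 2 + (y + root_im x y) ^ 2 ->
  continuity_2d_pt xi_re x y.
Proof.
  intro Hp. unfold xi_re.
  continuity_2d; try apply continuity_root_re; try apply continuity_root_im.
  apply continuity_1d_2d_pt_comp.
  - apply continuity_pt_filterlim, continuous_ln, sqrt_lt_R0, Hp.
  - continuity_2d; try apply continuity_root_re; try apply continuity_root_im.
Qed.

Lemma continuity_xi_im x y : y + root_im x y <> 0 -> continuity_2d_pt xi_im x y.
Proof.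
  intro Hp. unfold xi_im, Rdiv.
  continuity_2d; try apply continuity_root_re; try apply continuity_root_im.
  apply (continuity_1d_2d_pt_comp atan).
  - apply continuity_pt_filterlim, (continuous_atan_comp (fun z => z)), continuous_id.
  - continuity_2d; try apply continuity_root_re; try apply continuity_root_im.
    apply continuity_2d_pt_inv; [|exact Hp].
    continuity_2d; apply continuity_root_im.
Qed.

Lemma Re_xi_closed_sector x y : ~ open_sector (x, y) -> 0 <= x -> y <= 0 ->
  0 < (x + root_re x y) ^ 2 + (y + root_im x y) ^ 2 -> Re (xi (x, y)) = xi_re x y.
Proof.
  intros Hn Hx Hy Hp.
  apply (Re_xi_boundary (x, y) (fun z => xi_re (fst z) (snd z)) Hn Hx Hy).
  - intros [u v] Hs. apply xi_formula_parts, Hs.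
  - apply continuity_2d_pt_filterlim, continuity_xi_re, Hp.
Qed.

Lemma root_real_ge1 s : 1 <= s -> root_re s 0 = sqrt (s * s - 1) /\ root_im s 0 = 0.
Proof.
  intro Hs. unfold root_re, root_im. replace (2 * s * 0) with 0 by ring.
  replace (s * s - 0 * 0 - 1) with (s * s - 1) by ring.
  destruct (sqrt_re_im_nonneg (s * s - 1)) as [-> ->]; [nra|]. split; [reflexivity|ring].
Qed.

Lemma root_real_le1 s : 0 <= s <= 1 -> root_re s 0 = 0 /\ root_im s 0 = - sqrt (1 - s * s).
Proof.
  intro Hs. unfold root_re, root_im. replace (2 * s * 0) with 0 by ring.
  replace (1 - s * s) with (- (s * s - 0 * 0 - 1)) by ring.
  destruct (sqrt_re_im_nonpos (s * s - 0 * 0 - 1)) as [-> ->]; [nra|]. split; reflexivity.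
Qed.

Lemma root_neg_imag s : root_re 0 (- s) = 0 /\ root_im 0 (- s) = - sqrt (1 + s * s).
Proof.
  unfold root_re, root_im. replace (2 * 0 * - s) with 0 by ring.
  replace (1 + s * s) with (- (0 * 0 - - s * - s - 1)) by ring.
  destruct (sqrt_re_im_nonpos (0 * 0 - - s * - s - 1)) as [-> ->]; [nra|]. split; reflexivity.
Qed.

Definition xi_pos_real (s : R) : R :=
  1 / 2 * (s * sqrt (s * s - 1) - ln (s + sqrt (s * s - 1))).
Definition xi_neg_imag (s : R) : R :=
  - (1 / 2) * (s * sqrt (1 + s * s) + ln (s + sqrt (1 + s * s))).

Lemma not_open_sector_real s : ~ open_sector (s, 0).
Proof. rewrite open_sector_iff. simpl. lra. Qed.

Lemma not_open_sector_imag s : ~ open_sector (0, s).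
Proof. rewrite open_sector_iff. simpl. lra. Qed.

Lemma Re_xi_real_ge1 s : 1 <= s -> Re (xi (s, 0)) = xi_pos_real s.
Proof.
  intro Hs. destruct (root_real_ge1 s Hs) as [E1 E2]. pose proof (sqrt_pos (s * s - 1)).
  rewrite Re_xi_closed_sector;
    [| apply not_open_sector_real | lra | lra | rewrite E1, E2; nra].
  unfold xi_re, xi_pos_real. rewrite E1, E2.
  replace ((s + sqrt (s * s - 1)) ^ 2 + (0 + 0) ^ 2)
    with ((s + sqrt (s * s - 1)) * (s + sqrt (s * s - 1))) by ring.
  rewrite sqrt_square by lra. ring.
Qed.

Lemma Re_xi_real_le1 s : 0 <= s <= 1 -> Re (xi (s, 0)) = 0.
Proof.
  intro Hs. destruct (root_real_le1 s Hs) as [E1 E2].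
  assert (Hq : sqrt (1 - s * s) * sqrt (1 - s * s) = 1 - s * s) by (apply sqrt_sqrt; nra).
  rewrite Re_xi_closed_sector;
    [| apply not_open_sector_real | lra | lra | rewrite E1, E2; nra].
  unfold xi_re. rewrite E1, E2.
  replace ((s + 0) ^ 2 + (0 + - sqrt (1 - s * s)) ^ 2) with 1 by nra.
  rewrite sqrt_1, ln_1. ring.
Qed.

Lemma Re_xi_neg_imag s : 0 <= s -> Re (xi (0, - s)) = xi_neg_imag s.
Proof.
  intro Hs. destruct (root_neg_imag s) as [E1 E2].
  assert (Hq : 0 < sqrt (1 + s * s)) by (apply sqrt_lt_R0; nra).
  rewrite Re_xi_closed_sector;
    [| apply not_open_sector_imag | lra | lra | rewrite E1, E2; nra].
  unfold xi_re, xi_neg_imag. rewrite E1, E2.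
  replace ((0 + 0) ^ 2 + (- s + - sqrt (1 + s * s)) ^ 2)
    with ((s + sqrt (1 + s * s)) * (s + sqrt (1 + s * s))) by ring.
  rewrite sqrt_square by lra. ring.
Qed.

Lemma xi_0 : xi (0, 0) = (0, PI / 4).
Proof.
  destruct (root_neg_imag 0) as [E1 E2].
  rewrite Ropp_0 in E1, E2. replace (1 + 0 * 0) with 1 in E2 by ring. rewrite sqrt_1 in E2.
  apply injective_projections.
  - change (Re (xi (0, 0)) = 0). rewrite <- Ropp_0 at 2. rewrite Re_xi_neg_imag by lra.
    unfold xi_neg_imag. replace (1 + 0 * 0) with 1 by ring. rewrite sqrt_1, Rplus_0_l, ln_1. ring.
  - change (Im (xi (0, 0)) = PI / 4).
    rewrite (Im_xi_boundary (0, 0) (fun z => xi_im (fst z) (snd z)));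
      [| apply not_open_sector_imag | simpl; lra | simpl; lra
       | intros [u v] Hs; apply xi_formula_parts, Hs
       | apply continuity_2d_pt_filterlim, continuity_xi_im; cbn [fst snd]; rewrite E2; lra].
    cbn [fst snd]. unfold xi_im. rewrite E1, E2.
    replace ((0 + 0) / (0 + - (1))) with 0 by field. rewrite atan_0. field.
Qed.

Lemma increasing_of_derive_pos (f df : R -> R) (a : R) :
  (forall z, a < z -> is_derive f z (df z)) -> continuity_pt f a ->
  (forall z, a < z -> 0 < df z) ->
  forall x y, a <= x -> x < y -> f x < f y.
Proof.
  intros Hd Ha Hpos.
  assert (Hincr : forall x y, a < x -> x < y -> f x < f y)
    by (intros x y Hx Hxy; apply (incr_function f a p_infty df);
        simpl; auto; intros z Hz _; apply Hpos, Hz).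
  intros x y Hx Hxy. destruct (Rle_lt_or_eq_dec a x Hx) as [Hax|<-]; [apply Hincr; assumption|].
  set (m := (a + y) / 2).
  apply (Rle_lt_trans _ (f m)); [|apply Hincr; unfold m; lra].
  (* the derivative is unknown at [a] itself, so the mean value theorem is applied to its
     positive part *)
  destruct (MVT_gen f a m (fun z => Rmax 0 (df z))) as [c [_ Hc]].
  - intros z Hz. rewrite Rmin_left, Rmax_right in Hz by (unfold m; lra).
    rewrite Rmax_right by (apply Rlt_le, Hpos; lra). apply Hd. lra.
  - intros z Hz. rewrite Rmin_left, Rmax_right in Hz by (unfold m; lra).
    destruct (Rle_lt_or_eq_dec a z (proj1 Hz)) as [Haz|<-]; [|exact Ha].
    apply continuity_pt_filterlim, (ex_derive_continuous (K := R_AbsRing) (V := R_NormedModule)).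
    exists (df z). apply Hd, Haz.
  - assert (0 <= Rmax 0 (df c) * (m - a)) by (apply Rmult_le_pos; [apply Rmax_l|unfold m; lra]).
    lra.
Qed.

Lemma h_polar x (lam : C) : lam <> 0%C ->
  h x lam = exp (Re (Cmult lam (xi (x / sqrt (Cmod lam) * cos (Carg lam / 2),
                                     - (x / sqrt (Cmod lam) * sin (Carg lam / 2)))))).
Proof.
  intro Hl. unfold h. rewrite Cpow_neg_half by exact Hl. do 3 f_equal.
  f_equal. unfold Cmult, RtoC; simpl. unfold Rdiv. apply injective_projections; simpl; ring.
Qed.

Lemma Re_Cmult_pair a b (z : C) : Re (Cmult (a, b) z) = a * Re z - b * Im z.
Proof. destruct z. reflexivity. Qed.

Lemma h_pos_real a x : 0 < a -> h x (a, 0) = exp (a * Re (xi (x / sqrt a, 0))).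
Proof.
  intro Ha. rewrite h_polar by (intro E; injection E; lra).
  rewrite Cmod_real, Rabs_pos_eq, Carg_pos_real by lra.
  replace (0 / 2) with 0 by field. rewrite cos_0, sin_0.
  replace (x / sqrt a * 0) with 0 by ring. rewrite Ropp_0, Rmult_1_r, Re_Cmult_pair. f_equal. ring.
Qed.

Lemma h_neg_real a x : a < 0 -> h x (a, 0) = exp (a * Re (xi (0, - (x / sqrt (- a))))).
Proof.
  intro Ha. rewrite h_polar by (intro E; injection E; lra).
  rewrite Cmod_real, Rabs_left, Carg_neg_real by lra.
  rewrite cos_PI2, sin_PI2, Rmult_0_r, Rmult_1_r, Re_Cmult_pair. f_equal. ring.
Qed.

Lemma xi_pos_real_increasing s1 s2 : 1 <= s1 -> s1 < s2 -> xi_pos_real s1 < xi_pos_real s2.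
Proof.
  apply (increasing_of_derive_pos xi_pos_real (fun s => sqrt (s * s - 1)) 1).
  - intros s Hs. unfold xi_pos_real.
    assert (Hr : 0 < sqrt (s * s - 1)) by (apply sqrt_lt_R0; nra).
    assert (Hrr : sqrt (s * s - 1) * sqrt (s * s - 1) = s * s - 1) by (apply sqrt_sqrt; nra).
    auto_derive; replace (s * s + - (1)) with (s * s - 1) by ring.
    + repeat split; nra.
    + set (r := sqrt (s * s - 1)) in *.
      transitivity (1 / 2 * (r + s * s / r - 1 / r)); [field; lra|].
      replace (s * s) with (r * r + 1) by lra. field. lra.
  - assert (Hr : continuity_pt (fun s => sqrt (s * s - 1)) 1).
    { apply (continuity_pt_comp (fun s => s * s - 1) sqrt); [reg|].
      apply continuity_pt_filterlim, continuous_sqrt. }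
    unfold xi_pos_real.
    apply continuity_pt_mult; [apply continuity_pt_const; intros ? ?; reflexivity|].
    apply continuity_pt_minus; [apply continuity_pt_mult; [apply continuity_pt_id|exact Hr]|].
    apply (continuity_pt_comp (fun s => s + sqrt (s * s - 1)) ln);
      [apply continuity_pt_plus; [apply continuity_pt_id|exact Hr]|].
    apply continuity_pt_filterlim, continuous_ln.
    replace (1 * 1 - 1) with 0 by ring. rewrite sqrt_0. lra.
  - intros s Hs. apply sqrt_lt_R0. nra.
Qed.

Lemma xi_neg_imag_decreasing s1 s2 : 0 <= s1 -> s1 < s2 -> xi_neg_imag s2 < xi_neg_imag s1.
Proof.
  intros H1 H2. unfold xi_neg_imag.
  assert (Hr : sqrt (1 + s1 * s1) < sqrt (1 + s2 * s2)) by (apply sqrt_lt_1; nra).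
  assert (Hr1 : 0 < sqrt (1 + s1 * s1)) by (apply sqrt_lt_R0; nra).
  assert (s1 * sqrt (1 + s1 * s1) < s2 * sqrt (1 + s2 * s2)) by nra.
  assert (ln (s1 + sqrt (1 + s1 * s1)) < ln (s2 + sqrt (1 + s2 * s2)))
    by (apply ln_increasing; lra).
  lra.
Qed.

Lemma h_pos_real_increasing a x y : 0 < a -> sqrt a <= x -> x < y -> h x (a, 0) < h y (a, 0).
Proof.
  intros Ha Hx Hxy. assert (Hs : 0 < sqrt a) by (apply sqrt_lt_R0, Ha).
  assert (H1 : 1 <= x / sqrt a) by (apply Rle_div_r; lra).
  assert (H2 : x / sqrt a < y / sqrt a)
    by (apply Rmult_lt_compat_r; [apply Rinv_0_lt_compat|]; assumption).
  rewrite !h_pos_real, !Re_xi_real_ge1 by lra.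
  apply exp_increasing, Rmult_lt_compat_l, xi_pos_real_increasing; assumption.
Qed.

Lemma h_pos_real_eq_1 a x : 0 < a -> 0 <= x <= sqrt a -> h x (a, 0) = 1.
Proof.
  intros Ha Hx. assert (Hs : 0 < sqrt a) by (apply sqrt_lt_R0, Ha).
  rewrite h_pos_real, Re_xi_real_le1, Rmult_0_r; [apply exp_0| |exact Ha].
  split.
  - apply Rmult_le_pos; [lra|apply Rlt_le, Rinv_0_lt_compat, Hs].
  - apply (Rdiv_le_1 x (sqrt a) Hs). lra.
Qed.

Lemma h_neg_real_increasing a x y : a < 0 -> 0 <= x -> x < y -> h x (a, 0) < h y (a, 0).
Proof.
  intros Ha Hx Hxy. assert (Hs : 0 < / sqrt (- a)) by (apply Rinv_0_lt_compat, sqrt_lt_R0; lra).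
  assert (H1 : 0 <= x / sqrt (- a)) by (apply Rmult_le_pos; lra).
  assert (H2 : x / sqrt (- a) < y / sqrt (- a)) by (apply Rmult_lt_compat_r; assumption).
  rewrite !h_neg_real, !Re_xi_neg_imag by lra.
  apply exp_increasing. pose proof (xi_neg_imag_decreasing _ _ H1 H2). nra.
Qed.

Definition sqrt_sub_re (a b x : R) : R := sqrt_re (x * x - a) b.
Definition sqrt_sub_im (a b x : R) : R := sqrt_im (x * x - a) b.

(* [Re (lam * xi (x * lam^(-1/2)))] for [lam = (a, b)], up to an additive constant
   (see [h_upper]). *)
Definition xi_phase (a b x : R) : R :=
  1 / 2 * x * sqrt_sub_re a b x
  - 1 / 4 * a * ln ((x + sqrt_sub_re a b x) ^ 2 + sqrt_sub_im a b x ^ 2)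
  + 1 / 2 * b * atan (- sqrt_sub_im a b x / (x + sqrt_sub_re a b x)).

Lemma is_derive_xi_phase a b x : 0 < b -> 0 <= x -> is_derive (xi_phase a b) x (sqrt_sub_re a b x).
Proof.
  intros Hb Hx.
  destruct (sqrt_re_im_spec (x * x - a) b) as (HP & HQ & Ediff & Eprod & Esum); [lra|].
  rewrite Rabs_pos_eq in Eprod by lra.
  unfold xi_phase, sqrt_sub_re, sqrt_sub_im, sqrt_re, sqrt_im in *.
  auto_derive;
    replace ((x * x + - a) * ((x * x + - a) * 1) + b * (b * 1)) with ((x * x - a) ^ 2 + b ^ 2)
      by ring;
    set (m := sqrt ((x * x - a) ^ 2 + b ^ 2)) in *;
    replace ((m + (x * x + - a)) * / 2) with ((m + (x * x - a)) / 2) by (unfold Rdiv; ring);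
    replace ((m + - (x * x + - a)) * / 2) with ((m - (x * x - a)) / 2) by (unfold Rdiv; ring);
    set (P := sqrt ((m + (x * x - a)) / 2)) in *; set (Q := sqrt ((m - (x * x - a)) / 2)) in *;
    clearbody m P Q; subst m.
  - assert (0 <= (x * x - a) ^ 2) by apply pow2_ge_0. repeat split; nra.
  - replace a with (x * x - P * P + Q * Q) by lra. subst b. field. repeat split; nra.
Qed.

Section UpperHalfPlane.

Variables sr al : R.
Hypotheses (Hsr : 0 < sr) (Hal : 0 < al < PI / 2).

(* [(a, b)] is [lam = (sr * e^(i al))^2]. *)
Let c := cos al.
Let d := sin al.
Let a := sr * sr * (c * c - d * d).
Let b := sr * sr * (2 * c * d).

Let c_pos : 0 < c. Proof. apply cos_gt_0; lra. Qed.
Let d_pos : 0 < d. Proof. apply sin_gt_0; lra. Qed.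
Let cd_sqr : c * c + d * d = 1.
Proof. pose proof (sin2_cos2 al). unfold Rsqr in *. unfold c, d. lra. Qed.
Let b_pos : 0 < b.
Proof. unfold b. pose proof c_pos. pose proof d_pos. apply Rmult_lt_0_compat; nra. Qed.

Section Rotation.

Variable x : R.
Hypothesis Hx : 0 < x.

(* [(t1, t2) = x * lam^(-1/2)], and [(P, - Q)] is the principal square root of [x^2 - lam]. *)
Let t1 := x / sr * c.
Let t2 := - (x / sr * d).
Let P := sqrt_sub_re a b x.
Let Q := sqrt_sub_im a b x.
Let PQ_spec : 0 < P /\ 0 < Q /\ P * P - Q * Q = x * x - a /\ 2 * P * Q = b.
Proof.
  destruct (sqrt_re_im_spec (x * x - a) b) as (HP & HQ & E1 & E2 & _); [lra|].
  rewrite Rabs_pos_eq in E2 by lra. repeat split; assumption.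
Qed.

Lemma root_rotated :
  root_re t1 t2 = (c * P - d * Q) / sr /\ root_im t1 t2 = - (c * Q + d * P) / sr.
Proof.
  assert (Ht : t1 * t2 < 0).
  { unfold t1, t2. assert (Hk : 0 < x / sr) by (apply Rdiv_pos_pos; assumption).
    replace (x / sr * c * - (x / sr * d)) with (- ((x / sr) * (x / sr) * (c * d))) by ring.
    pose proof (Rmult_lt_0_compat _ _ c_pos d_pos). pose proof (Rmult_lt_0_compat _ _ Hk Hk). nra. }
  destruct (sqrt_re_im_spec (t1 * t1 - t2 * t2 - 1) (2 * t1 * t2)) as (HS1 & HS2 & ES & EP & _);
    [intro; nra|].
  rewrite Rabs_left in EP by lra.
  destruct PQ_spec as (HP & HQ & EPQ & Eb).
  unfold root_re, root_im.
  set (S1 := sqrt_re _ _) in *. set (S2 := sqrt_im _ _) in *.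
  (* [sqrt(lam) * sqrt(t^2 - 1) = sqrt(x^2 - lam)]: both sides have positive real part and
     equal squares *)
  assert (V : sr * (c * S1 + d * S2) = P /\ sr * (d * S1 - c * S2) = - Q).
  { pose proof c_pos. pose proof d_pos. pose proof cd_sqr.
    apply eq_of_sqr_eq_re_pos; [apply Rmult_lt_0_compat; nra | exact HP | |].
    - replace (P * P - - Q * - Q) with (x * x - a) by (rewrite <- EPQ; ring).
      transitivity (sr * sr * ((c * c - d * d) * (S1 * S1 - S2 * S2) + 2 * c * d * (2 * S1 * S2)));
        [ring|]. rewrite ES, EP. unfold t1, t2, a.
      transitivity (x * x * ((c * c + d * d) * (c * c + d * d)) - sr * sr * (c * c - d * d));
        [field; lra|]. rewrite cd_sqr. ring.
    - transitivity (sr * sr * ((c * c - d * d) * (- (2 * S1 * S2))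
                              + 2 * c * d * (S1 * S1 - S2 * S2)) / 2);
        [field|]. rewrite ES, EP. unfold t1, t2.
      transitivity (- (sr * sr * (2 * c * d)) / 2); [field; lra|]. fold b. rewrite <- Eb. field. }
  destruct V as [V1 V2].
  assert (E1 : c * P - d * Q = sr * S1 * (c * c + d * d))
    by (rewrite <- V1, <- (Ropp_involutive Q), <- V2; ring).
  assert (E2 : c * Q + d * P = sr * S2 * (c * c + d * d))
    by (rewrite <- V1, <- (Ropp_involutive Q), <- V2; ring).
  rewrite E1, E2, cd_sqr. split; field; lra.
Qed.

Lemma arg_rotated :
  - (PI / 2) - atan ((t1 + root_re t1 t2) / (t2 + root_im t1 t2)) = atan (- Q / (x + P)) - al.
Proof.
  destruct PQ_spec as (HP & HQ & _). destruct root_rotated as [-> ->].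
  pose proof c_pos. pose proof d_pos. pose proof PI_RGT_0.
  set (X := x + P). assert (HX : 0 < X) by (unfold X; lra).
  assert (HXQ : ((X, - Q) : C) <> 0%C) by (intro E; injection E; lra).
  destruct (Cmod_Carg_polar (X, - Q) HXQ) as [PX PQ]. cbn [Re Im fst snd] in PX, PQ.
  assert (Hth : Carg (X, - Q) = atan (- Q / X)).
  { unfold Carg; simpl. destruct (Rlt_dec 0 X); [reflexivity|lra]. }
  rewrite Hth in PX, PQ. pose proof (atan_bound (- Q / X)).
  assert (Hth0 : atan (- Q / X) < 0)
    by (rewrite <- atan_0; apply atan_increasing, Rdiv_neg_pos; lra).
  assert (Hr : 0 < Cmod (X, - Q)) by (apply Cmod_gt_0, HXQ).
  set (r := Cmod (X, - Q)) in *. set (th := atan (- Q / X)) in *.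
  (* [t + sqrt(t^2 - 1)] is [x + sqrt(x^2 - lam)] rotated by [-al] and scaled by [1/sr] *)
  assert (Ept : (t1 + (c * P - d * Q) / sr, t2 + - (c * Q + d * P) / sr)
                = (r / sr * cos (th - al), r / sr * sin (th - al))).
  { rewrite cos_minus, sin_minus. fold c d. unfold t1, t2, X in *.
    apply injective_projections; simpl.
    - transitivity ((c * (x + P) - d * Q) / sr); [field; lra|].
      rewrite PX, <- (Ropp_involutive Q), PQ. field. lra.
    - transitivity (- (d * (x + P) + c * Q) / sr); [field; lra|].
      rewrite PX, <- (Ropp_involutive Q), PQ. field. lra. }
  transitivity (Carg (t1 + (c * P - d * Q) / sr, t2 + - (c * Q + d * P) / sr)).
  - rewrite Carg_lower_half; [reflexivity|]. simpl. unfold t2.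
    assert (0 < x / sr * d + (c * Q + d * P) / sr); [|lra].
    apply Rplus_lt_0_compat;
      [apply Rmult_lt_0_compat; [apply Rdiv_pos_pos|]|apply Rdiv_pos_pos]; nra.
  - rewrite Ept. apply Carg_polar_lower; [apply Rdiv_pos_pos|]; lra.
Qed.

Lemma modulus_rotated :
  ln (sqrt ((t1 + root_re t1 t2) ^ 2 + (t2 + root_im t1 t2) ^ 2))
  = - ln sr + ln ((x + P) ^ 2 + Q ^ 2) / 2.
Proof.
  destruct PQ_spec as (HP & HQ & _). destruct root_rotated as [-> ->].
  assert (HD : 0 < (x + P) ^ 2 + Q ^ 2) by nra.
  replace ((t1 + (c * P - d * Q) / sr) ^ 2 + (t2 + - (c * Q + d * P) / sr) ^ 2)
    with (((x + P) ^ 2 + Q ^ 2) / (sr * sr)).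
  2: { unfold t1, t2. transitivity ((c * c + d * d) * ((x + P) ^ 2 + Q ^ 2) / (sr * sr)).
       - rewrite cd_sqr. field. lra.
       - field. lra. }
  assert (Hs : 0 < sqrt (((x + P) ^ 2 + Q ^ 2) / (sr * sr)))
    by (apply sqrt_lt_R0, Rdiv_pos_pos; nra).
  apply (Rmult_eq_reg_l 2); [|lra].
  replace (2 * ln (sqrt (((x + P) ^ 2 + Q ^ 2) / (sr * sr))))
    with (ln (sqrt (((x + P) ^ 2 + Q ^ 2) / (sr * sr)) * sqrt (((x + P) ^ 2 + Q ^ 2) / (sr * sr))))
    by (rewrite ln_mult by exact Hs; ring).
  rewrite sqrt_sqrt by (apply Rlt_le, Rdiv_pos_pos; nra).
  unfold Rdiv. rewrite ln_mult, ln_Rinv, ln_mult by (try apply Rinv_0_lt_compat; nra). field.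
Qed.

Lemma product_rotated :
  a * (t1 * root_re t1 t2 - t2 * root_im t1 t2) - b * (t1 * root_im t1 t2 + t2 * root_re t1 t2)
  = x * P.
Proof.
  destruct root_rotated as [-> ->]. unfold a, b, t1, t2.
  transitivity (x * P * ((c * c + d * d) * (c * c + d * d))); [field; lra|].
  rewrite cd_sqr. ring.
Qed.

Lemma xi_rotated :
  a * xi_re t1 t2 - b * xi_im t1 t2 = xi_phase a b x + a / 2 * ln sr - b / 2 * al.
Proof.
  unfold xi_re, xi_im.
  transitivity (1 / 2 * (a * (t1 * root_re t1 t2 - t2 * root_im t1 t2)
                         - b * (t1 * root_im t1 t2 + t2 * root_re t1 t2))
    - a / 2 * ln (sqrt ((t1 + root_re t1 t2) ^ 2 + (t2 + root_im t1 t2) ^ 2))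
    + b / 2 * (- (PI / 2) - atan ((t1 + root_re t1 t2) / (t2 + root_im t1 t2)))); [field|].
  rewrite product_rotated, modulus_rotated, arg_rotated. unfold xi_phase. fold P Q. field.
Qed.

End Rotation.

Lemma Cmod_upper : Cmod (a, b) = sr * sr.
Proof.
  unfold Cmod; cbn [fst snd]. rewrite <- (sqrt_square (sr * sr)) by nra. f_equal.
  unfold a, b. transitivity (sr * sr * (sr * sr) * ((c * c + d * d) * (c * c + d * d))); [ring|].
  rewrite cd_sqr. ring.
Qed.

Lemma Carg_upper : Carg (a, b) = 2 * al.
Proof.
  pose proof PI_RGT_0. rewrite Carg_upper_half by exact b_pos. cbn [Re Im fst snd].
  replace (a / b) with (tan (PI / 2 - 2 * al)).
  - rewrite atan_tan by lra. ring.
  - unfold tan, a, b. rewrite sin_minus, cos_minus, sin_PI2, cos_PI2, sin_2a, cos_2a. fold c d.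
    field. pose proof c_pos. pose proof d_pos. split; nra.
Qed.

Lemma xi_phase_0 : xi_phase a b 0 + a / 2 * ln sr - b / 2 * al = - b * (PI / 4).
Proof.
  pose proof c_pos. pose proof d_pos. pose proof cd_sqr. pose proof PI_RGT_0.
  assert (Em : sqrt ((0 * 0 - a) ^ 2 + b ^ 2) = sr * sr).
  { rewrite <- Cmod_upper. unfold Cmod; cbn [fst snd]. f_equal. ring. }
  assert (EP : sqrt_sub_re a b 0 = sr * d).
  { unfold sqrt_sub_re, sqrt_re. rewrite Em, <- (sqrt_square (sr * d)) by nra. f_equal.
    unfold a. replace (c * c) with (1 - d * d) by lra. field. }
  assert (EQ : sqrt_sub_im a b 0 = sr * c).
  { unfold sqrt_sub_im, sqrt_im. rewrite Em, <- (sqrt_square (sr * c)) by nra. f_equal.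
    unfold a. replace (d * d) with (1 - c * c) by lra. field. }
  unfold xi_phase. rewrite EP, EQ.
  replace ((0 + sr * d) ^ 2 + (sr * c) ^ 2) with (sr * sr * (c * c + d * d)) by ring.
  rewrite cd_sqr, Rmult_1_r.
  replace (- (sr * c) / (0 + sr * d)) with (tan (al - PI / 2)).
  - rewrite atan_tan, ln_mult by lra. field.
  - unfold tan. rewrite sin_minus, cos_minus, sin_PI2, cos_PI2. fold c d. field. lra.
Qed.

Lemma h_upper x : 0 <= x -> h x (a, b) = exp (xi_phase a b x + a / 2 * ln sr - b / 2 * al).
Proof.
  intro Hx. rewrite h_polar by (intro E; injection E; pose proof b_pos; lra).
  rewrite Cmod_upper, Carg_upper, sqrt_square by lra.
  replace (2 * al / 2) with al by field. fold c d. f_equal.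
  destruct (Rle_lt_or_eq_dec 0 x Hx) as [Hx0|<-].
  - assert (Hk : 0 < x / sr) by (apply Rdiv_pos_pos; assumption).
    assert (Hs : open_sector (x / sr * c, - (x / sr * d))).
    { apply open_sector_iff. simpl.
      pose proof (Rmult_lt_0_compat _ _ Hk c_pos). pose proof (Rmult_lt_0_compat _ _ Hk d_pos).
      lra. }
    rewrite xi_open_sector by exact Hs. destruct (xi_formula_parts _ _ Hs) as [Er Ei].
    rewrite Re_Cmult_pair, Er, Ei. apply xi_rotated, Hx0.
  - replace ((0 / sr * c, - (0 / sr * d)) : C) with ((0, 0) : C) by (f_equal; field; lra).
    rewrite xi_0, Re_Cmult_pair, xi_phase_0. simpl. ring.
Qed.

Lemma h_upper_increasing x y : 0 <= x -> x < y -> h x (a, b) < h y (a, b).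
Proof.
  intros Hx Hxy. rewrite !h_upper by lra.
  apply exp_increasing, Rplus_lt_compat_r, Rplus_lt_compat_r.
  apply (increasing_of_derive_pos (xi_phase a b) (sqrt_sub_re a b) 0);
    [| |intros z Hz|assumption..].
  - intros z Hz. apply is_derive_xi_phase; lra.
  - apply continuity_pt_filterlim, (ex_derive_continuous (K := R_AbsRing) (V := R_NormedModule)).
    eexists. apply is_derive_xi_phase; lra.
  - destruct (sqrt_re_im_spec (z * z - a) b) as [HP _]; [lra|exact HP].
Qed.

End UpperHalfPlane.

Lemma upper_half_sqr_polar a b : 0 < b ->
  exists sr al, 0 < sr /\ 0 < al < PI / 2 /\
    a = sr * sr * (cos al * cos al - sin al * sin al) /\ b = sr * sr * (2 * cos al * sin al).
Proof.
  intro Hb. assert (Hl : ((a, b) : C) <> 0%C) by (intro E; injection E; lra).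
  destruct (Cmod_Carg_polar (a, b) Hl) as [Ea Eb]. cbn [Re Im fst snd] in Ea, Eb.
  assert (Hr : 0 < Cmod (a, b)) by (apply Cmod_gt_0, Hl).
  pose proof (atan_bound (a / b)). pose proof (Carg_upper_half (a, b) Hb).
  exists (sqrt (Cmod (a, b))), (Carg (a, b) / 2).
  rewrite sqrt_sqrt by lra. simpl in *.
  set (r := Cmod (a, b)) in *. set (th := Carg (a, b)) in *.
  repeat split; [apply sqrt_lt_R0, Hr|lra|lra| |].
  - rewrite Ea at 1. rewrite <- cos_2a. do 2 f_equal. field.
  - rewrite Eb at 1. replace (2 * cos (th / 2) * sin (th / 2)) with (sin (2 * (th / 2)))
      by (rewrite sin_2a; ring).
    do 2 f_equal. field.
Qed.

Theorem lemma2p3 (lam : C) (Hnz : lam <> 0%C) (Hup : 0 <= Im lam) :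
  ((Im lam = 0 /\ 0 < Re lam) ->
     (forall x y : R, sqrt (Re lam) <= x -> x < y -> h x lam < h y lam) /\
     (forall x : R, 0 <= x <= sqrt (Re lam) -> h x lam = 1))
  /\
  (0 < Carg lam <= PI ->
     forall x y : R, 0 <= x -> x < y -> h x lam < h y lam).
Proof.
  destruct lam as [a b]. cbn [Re Im fst snd] in *. split.
  - intros [-> Ha]. split.
    + intros x y. apply h_pos_real_increasing, Ha.
    + intro x. apply h_pos_real_eq_1, Ha.
  - intros Harg x y Hx Hxy. destruct (Rle_lt_or_eq_dec 0 b Hup) as [Hb|<-].
    + destruct (upper_half_sqr_polar a b Hb) as (sr & al & Hsr & Hal & -> & ->).
      apply h_upper_increasing; assumption.
    + destruct (Rtotal_order a 0) as [Ha|[->|Ha]].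
      * apply h_neg_real_increasing; assumption.
      * contradiction.
      * rewrite Carg_pos_real in Harg by exact Ha. lra.
Qed.
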